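(* Assume the setting in the context (deterministic $\Phi$ with $\operatorname{rank}(\widehat\Phi_1)=k$). Let $\theta_1\le\dots\le\theta_k$ be the principal angles between $\mathcal R(Q)$ and $\mathcal R(U_k)$, and $\varphi_1\le\dots\le\varphi_k$ the principal angles between $\mathcal R(P)$ and $\mathcal R(V_k)$. Then for $i=1,\dots,k$, $$\sin\theta_i\le\frac{\delta_i^{2q+2}\|\widehat\Phi_2\widehat\Phi_1^\dagger\|_2}{\sqrt{1+\delta_i^{4q+4}\|\widehat\Phi_2\widehat\Phi_1^\dagger\|_2^2}},\qquad \sin\varphi_i\le\frac{\delta_i^{2q+1}\|\widehat\Phi_2\widehat\Phi_1^\dagger\|_2}{\sqrt{1+\delta_i^{4q+2}\|\widehat\Phi_2\widehat\Phi_1^\dagger\|_2^2}}.$$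
   Context: Let $A\in\mathbb R^{m\times n}$ with $m\ge n$ have full SVD $A=U\Sigma V^T$, with singular values $\sigma_1\ge\sigma_2\ge\dots\ge\sigma_n\ge 0$. Fix an integer $k\ge1$ with $\sigma_k>0$ (the paper regards $A$ as having numerical rank $k$, i.e. $\sigma_k$ well separated from $\sigma_{k+1}$). Write $U=[U_k\ U_\perp]$ with $U_k\in\mathbb R^{m\times k}$ the first $k$ left singular vectors $u_1,\dots,u_k$, $U_\perp\in\mathbb R^{m\times(m-k)}$ the rest; $V=[V_k\ V_\perp]$ with $V_k\in\mathbb R^{n\times k}$ the first $k$ right singular vectors $v_1,\dots,v_k$; $\Sigma_k=\mathrm{diag}(\sigma_1,\dots,\sigma_k)$ and $\Sigma_\perp$ the remaining diagonal block of $\Sigma$ containing $\sigma_{k+1},\dots,\sigma_n$ (so $\|\Sigma_\perp\|_2=\sigma_{k+1}$, $\|\Sigma_\perp\|_F=(\sum_{i>k}\sigma_i^2)^{1/2}$). The notation $\|\cdot\|_{2,F}$ means the statement holds for both the spectral and Frobenius norm. Let $p\ge1$ be an oversampling integer, $d=k+p<n$, and $q\ge0$ an integer (power-iteration parameter). RU-QLP (Randomized Unpivoted QLP): given $\Phi\in\mathbb R^{m\times d}$, let $\bar P\in\mathbb R^{n\times d}$ have orthonormal columns spanning the range of $(A^TA)^qA^T\Phi$ (assumed of rank $d$); compute the thin unpivoted QR factorization $A\bar P=QR$ with $Q\in\mathbb R^{m\times d}$ having orthonormal columns and $R\in\mathbb R^{d\times d}$ upper triangular; compute the thin unpivoted QR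 factorization $R^T=\widetilde P\widetilde R$; set $P=\bar P\widetilde P\in\mathbb R^{n\times d}$ and $L=\widetilde R^T$ (lower triangular), giving $\hat A=QLP^T$. Partition $R=\begin{bmatrix}R_{11}&R_{12}\\0&R_{22}\end{bmatrix}$ and $L=\begin{bmatrix}L_{11}&0\\L_{21}&L_{22}\end{bmatrix}$ with $R_{11},L_{11}\in\mathbb R^{k\times k}$. Define $\widehat\Phi_1=U_k^T\Phi\in\mathbb R^{k\times d}$ and $\widehat\Phi_2=U_\perp^T\Phi\in\mathbb R^{(m-k)\times d}$, assume $\widehat\Phi_1$ has rank $k$, and let $\dagger$ denote the Moore–Penrose inverse. Set $\delta_i=\sigma_{k+1}/\sigma_i$ for $i=1,\dots,k$ and $\gamma=\sigma_n/\sigma_1$. Principal angles between a subspace $\mathcal X$ and a $k$-dimensional subspace $\mathcal Y$ (with $\dim\mathcal X\ge k$) are the $k$ canonical angles $0\le\alpha_1\le\dots\le\alpha_k\le\pi/2$; for orthonormal bases $X$, $Y$, the values $\sin\alpha_i$ are the singular values of $(I-XX^T)Y$. *)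

From HB Require Import structures.
From mathcomp Require Import all_boot all_order all_algebra.
From mathcomp Require Import boolp classical_sets reals.
Set Implicit Arguments. Unset Strict Implicit. Unset Printing Implicit Defensive.
Import Order.TTheory GRing.Theory Num.Theory.
Local Open Scope ring_scope.
Local Open Scope classical_set_scope.

Section Defs.
Variable R : realType.

(* entry (i,j) of M (0-based nat indices), 0 when out of range *)
Definition mxentry (a b : nat) (M : 'M[R]_(a, b)) (i j : nat) : R :=
  match (insub i : option 'I_a), (insub j : option 'I_b) with
  | Some i', Some j' => M i' j'
  | _, _ => 0
  end.

(* s_j for a nat index j (0-based), 0 when out of range *)
Definition at_nat (b : nat) (s : 'I_b -> R) (j : nat) : R :=
  match (insub j : option 'I_b) with Some j' => s j' | None => 0 end.

Definition lcols (a b : nat) (M : 'M[R]_(a, b)) (k : nat) : 'M[R]_(a, k) :=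
  \matrix_(i < a, j < k) mxentry M i j.
Definition rcols (a b : nat) (M : 'M[R]_(a, b)) (k : nat) : 'M[R]_(a, b - k) :=
  \matrix_(i < a, j < b - k) mxentry M i (k + j).

Definition rdiag (a b : nat) (s : 'I_b -> R) : 'M[R]_(a, b) :=
  \matrix_(i < a, j < b) (if (i : nat) == j then s j else 0).

Definition orthonormal_cols (a b : nat) (M : 'M[R]_(a, b)) : Prop :=
  M^T *m M = 1%:M.

Definition upper_triangular (b : nat) (M : 'M[R]_b) : Prop :=
  is_trig_mx M^T.

(* column space of M equals column space of N *)
Definition same_range (a b c : nat) (M : 'M[R]_(a, b)) (N : 'M[R]_(a, c)) : Prop :=
  (M^T == N^T)%MS.

(* s (in some order) are the singular values of M : M = W * diag(s) * Z^T
   with W, Z orthogonal and s >= 0 (this is an SVD of M). *)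
Definition is_svals (a b : nat) (M : 'M[R]_(a, b)) (s : 'I_b -> R) : Prop :=
  exists (W : 'M[R]_a) (Z : 'M[R]_b),
    [/\ W^T *m W = 1%:M, Z^T *m Z = 1%:M, (forall j, 0 <= s j) &
        M = W *m rdiag a s *m Z^T].

(* Principal angles between range(X) (X orthonormal basis, dim >= k) and
   range(Y) (Y orthonormal basis, dim k): s i = sin(alpha_(i+1)), where
   alpha_1 <= ... <= alpha_k in [0, pi/2]; so s is nondecreasing and is
   the list of singular values of (I - X X^T) Y. *)
Definition principal_sines (a c k : nat) (X : 'M[R]_(a, c)) (Y : 'M[R]_(a, k))
    (s : 'I_k -> R) : Prop :=
  (forall i j : 'I_k, (i <= j)%N -> s i <= s j) /\
  is_svals ((1%:M - X *m X^T) *m Y) s.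

Definition vnorm (b : nat) (x : 'cV[R]_b) : R := Num.sqrt (\sum_i x i 0 ^+ 2).

Definition norm2 (a b : nat) (M : 'M[R]_(a, b)) : R :=
  sup [set y | exists x : 'cV[R]_b, vnorm x = 1 /\ y = vnorm (M *m x)].

Definition penrose (a b : nat) (M : 'M[R]_(a, b)) (X : 'M[R]_(b, a)) : Prop :=
  [/\ M *m X *m M = M, X *m M *m X = X, (M *m X)^T = M *m X & (X *m M)^T = X *m M].

Definition mpinv (a b : nat) (M : 'M[R]_(a, b)) : 'M[R]_(b, a) :=
  xget 0 [set X | penrose M X].

Definition angle_bound (t c : R) : R := t * c / Num.sqrt (1 + t ^+ 2 * c ^+ 2).

End Defs.

(* Work in the SVD bases: with [Psi = U^T Phi], the sampled matrix
   [(A^T A)^q A^T Phi] equals [V Sigma^(2q+1) Psi], so it lies in [range P], and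
   [A Pbar] puts [U Sigma^(2q+2) Psi] in [range Q].  Fix the exponent [e] and take
   [x] supported on the first [i+1] coordinates.  The vector
   [W Sigma^e Psi Phi1^+ Sigma_k^-e x] ([W = V] or [U]) lies in the range, agrees
   with [W_k x] on the head and has tail of norm at most
   [sigma_(k+1)^e ||Phi2 Phi1^+|| ||Sigma_k^-e x||]; subtracting the multiple
   [1 / (1 + t^2)] of it, [t = delta_i^e ||Phi2 Phi1^+||], leaves a residual of
   squared norm at most [t^2 / (1 + t^2) ||x||^2].  Courant--Fischer over this
   [(i+1)]-dimensional subspace bounds the [i]-th principal sine. *)

From HB Require Import structures.
From mathcomp Require Import all_boot all_order all_algebra.
From mathcomp Require Import boolp classical_sets reals.
From mathcomp Require Import ring.
Import Order.TTheory GRing.Theory Num.Theory.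
Set Implicit Arguments. Unset Strict Implicit. Unset Printing Implicit Defensive.
Local Open Scope ring_scope.

Section SquaredNorm.
Variable R : realType.
Implicit Types (a b : nat).

Definition sqnorm b (v : 'cV[R]_b) : R := \sum_i v i 0 ^+ 2.

Lemma sqnorm_ge0 b (v : 'cV[R]_b) : 0 <= sqnorm v.
Proof. by apply: sumr_ge0 => i _; rewrite sqr_ge0. Qed.

Lemma sqnorm_gt0 b (v : 'cV[R]_b) : v != 0 -> 0 < sqnorm v.
Proof.
move=> v0; rewrite lt_def sqnorm_ge0 andbT; apply: contra v0 => /eqP sv0.
apply/eqP/matrixP => r j; rewrite (ord1 j) mxE.
have /eqP := psumr_eq0P (fun i _ => sqr_ge0 (v i 0)) sv0 (i := r) isT.
by rewrite sqrf_eq0 => /eqP.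
Qed.

Lemma sqnormZ b (x : R) (v : 'cV[R]_b) : sqnorm (x *: v) = x ^+ 2 * sqnorm v.
Proof. by rewrite /sqnorm mulr_sumr; apply: eq_bigr => i _; rewrite mxE exprMn. Qed.

Lemma vnormE b (v : 'cV[R]_b) : vnorm v = Num.sqrt (sqnorm v).
Proof. by []. Qed.

Lemma sqnorm_tr b (v : 'cV[R]_b) : sqnorm v = (v^T *m v) 0 0.
Proof. by rewrite mxE; apply: eq_bigr => i _; rewrite mxE expr2. Qed.

Lemma entry_sqr_le_sqnorm b (v : 'cV[R]_b) j : v j 0 ^+ 2 <= sqnorm v.
Proof. by rewrite /sqnorm (bigD1 j) //= lerDl; apply: sumr_ge0 => i _; rewrite sqr_ge0. Qed.

Lemma sqnormD_orth b (v w : 'cV[R]_b) :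
  v^T *m w = 0 -> sqnorm (v + w) = sqnorm v + sqnorm w.
Proof.
move=> vw0; have wv0 : w^T *m v = 0 by rewrite -[v]trmxK -trmx_mul vw0 trmx0.
by rewrite !sqnorm_tr [(v + w)^T]raddfD !mulmxDl !mulmxDr vw0 wv0 addr0 add0r mxE.
Qed.

Lemma sqnorm_isometry a b (W : 'M[R]_(a, b)) (v : 'cV[R]_b) :
  W^T *m W = 1%:M -> sqnorm (W *m v) = sqnorm v.
Proof. by move=> WW; rewrite !sqnorm_tr trmx_mul mulmxA -(mulmxA v^T) WW mulmx1. Qed.

Lemma sqnorm_proj_le a d (X : 'M[R]_(a, d)) (v : 'cV[R]_a) :
  X^T *m X = 1%:M -> sqnorm ((1%:M - X *m X^T) *m v) <= sqnorm v.
Proof.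
move=> XX; have vE : v = (1%:M - X *m X^T) *m v + X *m (X^T *m v).
  by rewrite mulmxBl mul1mx mulmxA subrK.
rewrite {2}vE sqnormD_orth ?lerDl ?sqnorm_ge0 //.
rewrite trmx_mul linearB /= trmx1 trmx_mul trmxK -mulmxA mulmxBl mul1mx.
by rewrite -!mulmxA (mulmxA X^T) XX mul1mx subrr mulmx0.
Qed.

End SquaredNorm.

Section ColumnSpaces.
Variable R : realType.

Lemma same_range_factor a b c (M : 'M[R]_(a, b)) (N : 'M[R]_(a, c)) :
  same_range M N -> exists D : 'M[R]_(b, c), N = M *m D.
Proof.
by case/andP => _ /submxP [D ND]; exists D^T; rewrite -[N]trmxK ND trmx_mul trmxK.
Qed.

Lemma compl_proj_mul0 a d e (X : 'M[R]_(a, d)) (B : 'M[R]_(d, e)) :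
  X^T *m X = 1%:M -> (1%:M - X *m X^T) *m (X *m B) = 0.
Proof. by move=> XX; rewrite mulmxA mulmxBl mul1mx -mulmxA XX mulmx1 subrr mul0mx. Qed.

Lemma orthomx_mul_tr a d (M : 'M[R]_(a, d)) (O : 'M[R]_d) :
  O^T *m O = 1%:M -> (M *m O) *m (M *m O)^T = M *m M^T.
Proof. by move=> OO; rewrite trmx_mul -mulmxA (mulmxA O) mulmx1C // mul1mx. Qed.

Lemma orthonormal_cols_mul a d (M : 'M[R]_(a, d)) (O : 'M[R]_d) :
  M^T *m M = 1%:M -> O^T *m O = 1%:M -> (M *m O)^T *m (M *m O) = 1%:M.
Proof. by move=> MM OO; rewrite trmx_mul -mulmxA (mulmxA M^T) MM mul1mx. Qed.

End ColumnSpaces.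

Section NatIndexing.
Variable R : realType.
Implicit Types (a b k : nat).

Lemma mxentryE a b (M : 'M[R]_(a, b)) (i : 'I_a) (j : 'I_b) : mxentry M i j = M i j.
Proof. by rewrite /mxentry !valK. Qed.

Lemma at_natE a (F : 'I_a -> R) (i : 'I_a) : at_nat F i = F i.
Proof. by rewrite /at_nat valK. Qed.

Lemma mxentry_col a (z : 'cV[R]_a) l : mxentry z l 0 = at_nat (fun s => z s 0) l.
Proof. by rewrite /mxentry /at_nat (valK (ord0 : 'I_1)); case: insub. Qed.

Lemma sum_if_eq_at_nat a (F : 'I_a -> R) l :
  \sum_(s < a) (if (s : nat) == l then F s else 0) = at_nat F l.
Proof.
rewrite /at_nat; case: insubP => [s0 _ <-| la].
  rewrite (bigD1 s0) //= eqxx big1 ?addr0 // => s ss0; rewrite ifF //.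
  by apply/negbTE; apply: contra ss0 => /eqP e; apply/eqP/val_inj.
by rewrite big1 // => s _; case: eqP => // e; rewrite -e ltn_ord in la.
Qed.

Lemma sqnorm_big_nat b (v : 'cV[R]_b) :
  sqnorm v = \sum_(0 <= r < b) mxentry v r 0 ^+ 2.
Proof. by rewrite big_mkord; apply: eq_bigr => r _; rewrite mxentry_col at_natE. Qed.

Definition colsel a k (h : 'I_k -> nat) : 'M[R]_(a, k) :=
  \matrix_(r < a, j < k) ((r : nat) == h j)%:R.

Lemma mulmx_colselE c a k (h : 'I_k -> nat) (W : 'M[R]_(c, a)) i j :
  (W *m colsel a h) i j = mxentry W i (h j).
Proof.
rewrite mxE /mxentry valK -[RHS]sum_if_eq_at_nat; apply: eq_bigr => s _.
by rewrite mxE; case: eqP; rewrite ?mulr1 ?mulr0.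
Qed.

Lemma tr_colsel_mulE a k (h : 'I_k -> nat) (z : 'cV[R]_a) j :
  ((colsel a h)^T *m z) j 0 = mxentry z (h j) 0.
Proof.
rewrite -[_ *m _]trmxK trmx_mul trmxK mxE mulmx_colselE /mxentry.
by rewrite (valK (ord0 : 'I_1)); case: insub => // r; rewrite mxE.
Qed.

Lemma colsel_id_mulE b k (x : 'cV[R]_k) (r : 'I_b) :
  (colsel b (fun j : 'I_k => (j : nat)) *m x) r 0 = mxentry x r 0.
Proof.
rewrite mxE mxentry_col -sum_if_eq_at_nat; apply: eq_bigr => j _.
by rewrite mxE eq_sym; case: eqP; rewrite ?mul1r ?mul0r.
Qed.

Lemma lcols_colsel a b (W : 'M[R]_(a, b)) k :
  lcols W k = W *m colsel b (fun j : 'I_k => (j : nat)).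
Proof. by apply/matrixP => i j; rewrite mulmx_colselE mxE. Qed.

Lemma rcols_colsel a b (W : 'M[R]_(a, b)) k :
  rcols W k = W *m colsel b (fun j : 'I_(b - k) => (k + j)%N).
Proof. by apply/matrixP => i j; rewrite mulmx_colselE mxE. Qed.

Lemma sqnorm_tr_colsel_head a k (z : 'cV[R]_a) :
  sqnorm ((colsel a (fun j : 'I_k => (j : nat)))^T *m z) = \sum_(0 <= r < k) mxentry z r 0 ^+ 2.
Proof. by rewrite big_mkord; apply: eq_bigr => r _; rewrite tr_colsel_mulE. Qed.

Lemma sqnorm_tr_colsel_tail a k (z : 'cV[R]_a) :
  sqnorm ((colsel a (fun j : 'I_(a - k) => (k + j)%N))^T *m z)
  = \sum_(k <= r < a) mxentry z r 0 ^+ 2.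
Proof.
rewrite -[X in \sum_(X <= r < a) _]add0n big_addn big_mkord; apply: eq_bigr => r _.
by rewrite tr_colsel_mulE addnC.
Qed.

Lemma at_nat_ge0 n (sigma : 'I_n -> R) r :
  (forall j, 0 <= sigma j) -> 0 <= at_nat sigma r.
Proof. by move=> s0; rewrite /at_nat; case: insub. Qed.

Lemma at_nat_nonincr n (sigma : 'I_n -> R) :
  (forall j, 0 <= sigma j) -> (forall i j : 'I_n, (i <= j)%N -> sigma j <= sigma i) ->
  forall r r', (r <= r')%N -> at_nat sigma r' <= at_nat sigma r.
Proof.
move=> s0 sdec r r' rr'; rewrite {1}/at_nat; case: insubP => [j' _ ej'|]; last first.
  by rewrite at_nat_ge0.
rewrite /at_nat; case: insubP => [j _ ej|]; first by apply: sdec; rewrite ej ej'.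
by rewrite (leq_ltn_trans rr') // -ej' ltn_ord.
Qed.


Lemma at_nat_exp_nonincr n (sigma : 'I_n -> R) e :
  (forall j, 0 <= sigma j) -> (forall i j : 'I_n, (i <= j)%N -> sigma j <= sigma i) ->
  forall r r', (r <= r')%N -> at_nat sigma r' ^+ e <= at_nat sigma r ^+ e.
Proof.
move=> s0 sdec r r' rr'.
by rewrite lerXn2r ?nnegrE ?at_nat_ge0 ?(at_nat_nonincr s0 sdec rr').
Qed.

End NatIndexing.

Section DiagonalPowers.
Variable R : realType.

Lemma rdiag_mulE a b (s : 'I_b -> R) (w : 'cV[R]_b) r :
  (rdiag a s *m w) r 0 = at_nat (fun j => s j * w j 0) r.
Proof.
rewrite mxE -sum_if_eq_at_nat; apply: eq_bigr => j _; rewrite mxE eq_sym.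
by case: eqP; rewrite ?mul0r.
Qed.

Lemma tr_rdiag_mulE a b (s : 'I_b -> R) (z : 'cV[R]_a) r :
  ((rdiag a s)^T *m z) r 0 = s r * mxentry z r 0.
Proof.
rewrite mxE mxentry_col -sum_if_eq_at_nat mulr_sumr; apply: eq_bigr => j _.
by rewrite !mxE; case: eqP; rewrite ?mul0r ?mulr0.
Qed.

Lemma mxconj_exp n (V M : 'M[R]_n) q :
  V^T *m V = 1%:M -> (V *m M *m V^T) ^+ q = V *m M ^+ q *m V^T.
Proof.
move=> VV; have VV' : V *m V^T = 1%:M by apply: mulmx1C.
elim: q => [|q IH]; first by rewrite !expr0 -[1]/(1%:M) mulmx1 VV'.
by rewrite !exprS IH -!mulmxE !mulmxA -(mulmxA _ V^T V) VV mulmx1 -!mulmxA.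
Qed.

Definition powtr m n (A : 'M[R]_(m, n)) q : 'M[R]_(n, m) := (A^T *m A) ^+ q *m A^T.

Lemma powtr_svd m n (U : 'M[R]_m) (V : 'M[R]_n) (S : 'M[R]_(m, n)) q :
  U^T *m U = 1%:M -> V^T *m V = 1%:M ->
  powtr (U *m S *m V^T) q = V *m powtr S q *m U^T.
Proof.
move=> UU VV; rewrite /powtr !trmx_mul trmxK.
have -> : V *m (S^T *m U^T) *m (U *m S *m V^T) = V *m (S^T *m S) *m V^T.
  by rewrite -!mulmxA (mulmxA U^T) UU mul1mx !mulmxA.
by rewrite mxconj_exp // -!mulmxA (mulmxA V^T) VV mul1mx.
Qed.

Lemma rdiag_gram_exp_mul m n (sigma : 'I_n -> R) q (w : 'cV[R]_n) : (n <= m)%N ->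
  ((rdiag m sigma)^T *m rdiag m sigma) ^+ q *m w = \col_r (sigma r ^+ (2 * q) * w r 0).
Proof.
move=> nm; elim: q w => [|q IH] w.
  by rewrite expr0 -[1]/(1%:M) mul1mx; apply/matrixP => i j; rewrite mxE (ord1 j) mul1r.
have gramE : (rdiag m sigma)^T *m rdiag m sigma *m w = \col_r (sigma r ^+ 2 * w r 0).
  apply/matrixP => i j; rewrite (ord1 j) mxE -mulmxA tr_rdiag_mulE.
  rewrite (mxentryE _ (widen_ord nm i) ord0) rdiag_mulE.
  by rewrite (at_natE (fun j => sigma j * w j 0)) mulrA -expr2.
rewrite exprSr -mulmxE -mulmxA gramE IH; apply/matrixP => i j; rewrite !mxE.
by rewrite mulrA -exprD mulnS addnC.
Qed.

Lemma powtr_rdiag_mulE m n (sigma : 'I_n -> R) q (v : 'cV[R]_m) (r : 'I_n) :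
  (n <= m)%N ->
  (powtr (rdiag m sigma) q *m v) r 0 = at_nat sigma r ^+ (2 * q + 1) * mxentry v r 0.
Proof.
move=> nm; rewrite -mulmxA rdiag_gram_exp_mul // mxE tr_rdiag_mulE at_natE.
by rewrite mulrA -exprSr addn1.
Qed.

Lemma rdiag_powtr_mulE m n (sigma : 'I_n -> R) q (v : 'cV[R]_m) (r : 'I_m) :
  (n <= m)%N ->
  (rdiag m sigma *m powtr (rdiag m sigma) q *m v) r 0
  = at_nat sigma r ^+ (2 * q + 2) * mxentry v r 0.
Proof.
move=> nm; rewrite -mulmxA rdiag_mulE /at_nat.
case: insubP => [j _ rj|]; last by rewrite expr0n addn2 mul0r.
by rewrite powtr_rdiag_mulE // at_natE mulrA -exprS addn1 addn2 /mxentry rj.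
Qed.

End DiagonalPowers.

Section SpectralNorm.
Variable R : realType.
Implicit Types (a b : nat).

Lemma unit_sqnorm_entry_le1 b (x : 'cV[R]_b) j : sqnorm x = 1 -> `|x j 0| <= 1.
Proof.
move=> x1; rewrite -(ler_pXn2r (n := 2)) ?nnegrE // expr1n real_normK ?num_real //.
by rewrite -x1 entry_sqr_le_sqnorm.
Qed.

Lemma sqnorm_delta_mx b (j : 'I_b) : sqnorm (delta_mx j 0 : 'cV[R]_b) = 1.
Proof.
rewrite /sqnorm (bigD1 j) //= !mxE !eqxx expr1n big1 ?addr0 // => i ij.
by rewrite mxE (negbTE ij) expr0n.
Qed.

Lemma norm2_ub a b (G : 'M[R]_(a, b)) (x : 'cV[R]_b) : (0 < b)%N ->
  vnorm x = 1 -> vnorm (G *m x) <= norm2 G.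
Proof.
move=> b0 x1; apply: sup_upper_bound; last by exists x.
split; first by exists (vnorm (G *m x)), x.
exists (Num.sqrt (\sum_r (\sum_j `|G r j|) ^+ 2)) => _ [y [y1 ->]].
have sy1 : sqnorm y = 1 by rewrite -[sqnorm y]sqr_sqrtr ?sqnorm_ge0 // -vnormE y1 expr1n.
rewrite vnormE ler_wsqrtr //; apply: ler_sum => r _.
rewrite -real_normK ?num_real // ler_pXn2r ?nnegrE ?sumr_ge0 // mxE.
apply: (le_trans (ler_norm_sum _ _ _)); apply: ler_sum => j _.
by rewrite normrM -[leRHS]mulr1 ler_wpM2l ?unit_sqnorm_entry_le1.
Qed.

Lemma norm2_ge0 a b (G : 'M[R]_(a, b)) : (0 < b)%N -> 0 <= norm2 G.
Proof.
move=> b0; apply: le_trans (norm2_ub G (x := delta_mx (Ordinal b0) 0) b0 _).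
  exact: sqrtr_ge0.
by rewrite vnormE sqnorm_delta_mx sqrtr1.
Qed.

Lemma sqnorm_mul_le_norm2 a b (G : 'M[R]_(a, b)) (y : 'cV[R]_b) : (0 < b)%N ->
  sqnorm (G *m y) <= norm2 G ^+ 2 * sqnorm y.
Proof.
move=> b0; have [->|y0] := eqVneq y 0.
  by rewrite mulmx0 /sqnorm !big1 ?mulr0 // => i _; rewrite mxE expr0n.
set ny := Num.sqrt (sqnorm y).
have nyE : ny ^+ 2 = sqnorm y by rewrite sqr_sqrtr ?sqnorm_ge0.
have := norm2_ub G (x := ny^-1 *: y) b0.
rewrite !vnormE -scalemxAr !sqnormZ exprVn nyE mulVf ?gt_eqF ?sqnorm_gt0 // sqrtr1.
move=> /(_ erefl); rewrite -(ler_pXn2r (n := 2)) ?nnegrE ?sqrtr_ge0 ?norm2_ge0 //.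
rewrite sqr_sqrtr ?mulr_ge0 ?invr_ge0 ?sqnorm_ge0 // mulrC -ler_pdivlMr ?invr_gt0.
  by rewrite invrK.
by rewrite sqnorm_gt0.
Qed.

Lemma row_free_unitmx_mul_tr k d (M : 'M[R]_(k, d)) :
  row_free M -> M *m M^T \in unitmx.
Proof.
move=> Mfree; rewrite -row_free_unit; apply: inj_row_free => v vMM0.
suff vM0 : v *m M = 0 by apply: (row_free_inj Mfree); rewrite vM0 mul0mx.
have : sqnorm (v *m M)^T = 0.
  by rewrite sqnorm_tr trmxK trmx_mul mulmxA -(mulmxA v) vMM0 mul0mx mxE.
by move=> /eqP; apply: contraTeq => vM; rewrite gt_eqF // sqnorm_gt0 // trmx_eq0.
Qed.

Lemma mpinv_right k d (M : 'M[R]_(k, d)) : \rank M = k -> M *m mpinv M = 1%:M.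
Proof.
move=> rk; have Mfree : row_free M by rewrite /row_free rk.
set X := M^T *m invmx (M *m M^T).
have MX : M *m X = 1%:M by rewrite /X mulmxA mulmxV ?row_free_unitmx_mul_tr.
have pX : penrose M X.
  split; rewrite ?MX ?mul1mx ?trmx1 //; first by rewrite -mulmxA MX mulmx1.
  by rewrite /X !trmx_mul trmx_inv trmx_mul trmxK mulmxA.
have := xgetI 0 pX; rewrite -/(mpinv M) => -[MYM _ _ _].
by apply: (row_free_inj Mfree); rewrite MYM mul1mx.
Qed.

End SpectralNorm.

Section SingularValueBound.
Variable R : realType.

(* [span(e_0..e_i)] and [Z span(e_i..e_(k-1))] have dimensions summing to [k + 1]. *)
Lemma exists_head_supported_tail_image k (Z : 'M[R]_k) (i : 'I_k) :
  Z^T *m Z = 1%:M ->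
  exists x : 'cV[R]_k, [/\ x != 0, forall j : 'I_k, (i < j)%N -> x j 0 = 0
                       & forall r : 'I_k, (r < i)%N -> (Z^T *m x) r 0 = 0].
Proof.
move=> ZZ; set A : 'M[R]_k := pid_mx i.+1; set B : 'M[R]_k := copid_mx i *m Z^T.
have Zunit : Z^T \in unitmx by case: (mulmx1_unit ZZ).
have rB : \rank B = (k - i)%N.
  by rewrite mxrankMfree ?row_free_unit // rank_copid_mx // ltnW.
have : (A :&: B)%MS != 0.
  rewrite -mxrank_eq0; apply/eqP => cap0.
  have rA : \rank A = i.+1 by rewrite rank_pid_mx.
  have := mxrank_sum_cap A B; rewrite cap0 addn0 rA rB addSn subnKC; last exact: ltnW.
  by move=> sumE; have := rank_leq_col (A + B)%MS; rewrite sumE ltnn.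
case/rowV0Pn => w; rewrite sub_capmx => /andP [/submxP [a wA] /submxP [a2 wB]] w0.
exists w^T; split; first by rewrite trmx_eq0.
- move=> j ij; rewrite mxE wA mxE big1 // => l _; rewrite /A mxE.
  by case: eqP => [/= ->|]; rewrite ?mulr0 // ltnS leqNgt ij mulr0.
- move=> r ri; rewrite wB !trmx_mul trmxK !mulmxA ZZ mul1mx mxE big1 // => l _.
  rewrite /copid_mx !mxE; have [->|lr] := eqVneq l r.
    by rewrite eqxx ri subrr mul0r.
  by rewrite val_eqE (negbTE lr) subrr mul0r.
Qed.

Lemma rdiag_tail_sqnorm_ge b k (s : 'I_k -> R) (i : 'I_k) (z : 'cV[R]_k) :
  (k <= b)%N -> (forall j, 0 <= s j) -> (forall i j : 'I_k, (i <= j)%N -> s i <= s j) ->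
  (forall r : 'I_k, (r < i)%N -> z r 0 = 0) ->
  s i ^+ 2 * sqnorm z <= sqnorm (rdiag b s *m z).
Proof.
move=> kb s0 sinc ztail; rewrite !sqnorm_big_nat mulr_sumr (big_cat_nat (leq0n k) kb) /=.
rewrite -[leLHS]addr0; apply: lerD; last by apply: sumr_ge0 => r _; rewrite sqr_ge0.
apply: ler_sum_nat => r /andP [_ rk].
rewrite (mxentryE _ (Ordinal (leq_trans rk kb)) ord0) rdiag_mulE.
rewrite (at_natE (fun j => s j * z j 0) (Ordinal rk)) (mxentryE z (Ordinal rk) ord0).
rewrite exprMn; case: (ltnP r i) => [ri|ir]; first by rewrite ztail // expr0n !mulr0.
by rewrite ler_wpM2r ?sqr_ge0 // ler_pXn2r ?nnegrE ?sinc.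
Qed.

(* Courant--Fischer, for the [(i+1)]-th smallest singular value. *)
Lemma svals_sqr_le b k (M : 'M[R]_(b, k)) (s : 'I_k -> R) (i : 'I_k) (beta : R) :
  (k <= b)%N -> (forall i j : 'I_k, (i <= j)%N -> s i <= s j) -> is_svals M s ->
  (forall x : 'cV[R]_k, (forall j : 'I_k, (i < j)%N -> x j 0 = 0) ->
     sqnorm (M *m x) <= beta * sqnorm x) ->
  s i ^+ 2 <= beta.
Proof.
move=> kb sinc [W [Z [WW ZZ s0 ME]]] Mbound.
have [x [x0 xhead xtail]] := exists_head_supported_tail_image i ZZ.
have xE : sqnorm x = sqnorm (Z^T *m x).
  by rewrite sqnorm_isometry // trmxK; apply: mulmx1C.
have MxE : sqnorm (M *m x) = sqnorm (rdiag b s *m (Z^T *m x)).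
  by rewrite ME -!mulmxA sqnorm_isometry.
have := Mbound x xhead; rewrite MxE xE => le_beta.
rewrite -(ler_pM2r (sqnorm_gt0 x0)) xE.
by apply: le_trans le_beta; apply: rdiag_tail_sqnorm_ge.
Qed.

End SingularValueBound.

Section ResidualBound.
Variable R : realType.
Variables (k b m i : nat) (x u g : nat -> R) (c : R).
Hypotheses (ik : (i < k)%N) (kb : (k <= b)%N) (bm : (b <= m)%N).
Hypothesis x_head : forall r, (i < r)%N -> x r = 0.
Hypothesis g_nonincr : forall r r', (r <= r')%N -> g r' <= g r.
Hypothesis g_ge0 : forall r, 0 <= g r.
Hypothesis gi_gt0 : 0 < g i.
Hypothesis uE : forall r, (r < k)%N -> u r = x r / g r.
Hypothesis u_tail : \sum_(k <= r < m) u r ^+ 2 <= c ^+ 2 * \sum_(0 <= r < k) u r ^+ 2.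

Let t := g k / g i * c.
(* [alpha] minimises the resulting bound [(1 - alpha)^2 + alpha^2 t^2]. *)
Let alpha := (1 + t ^+ 2)^-1.
Let resid r := x r - alpha * (g r * u r).

Lemma gu_head r : (r < k)%N -> g r * u r = x r.
Proof.
move=> rk; rewrite uE //; case: (leqP r i) => [ri|ir]; last by rewrite x_head // !mul0r mulr0.
by rewrite mulrC divfK // gt_eqF // (lt_le_trans gi_gt0) ?g_nonincr.
Qed.

Lemma head_weighted_le : g i ^+ 2 * \sum_(0 <= r < k) u r ^+ 2 <= \sum_(0 <= r < k) x r ^+ 2.
Proof.
rewrite mulr_sumr; apply: ler_sum_nat => r /andP [_ rk].
case: (leqP r i) => [ri|ir]; last by rewrite uE // !x_head // mul0r expr0n /= mulr0.
rewrite -(gu_head rk) exprMn ler_wpM2r ?sqr_ge0 //.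
by rewrite ler_pXn2r ?nnegrE ?g_nonincr // ltW.
Qed.

Lemma resid_head_sum :
  \sum_(0 <= r < k) resid r ^+ 2 = (1 - alpha) ^+ 2 * \sum_(0 <= r < k) x r ^+ 2.
Proof.
rewrite mulr_sumr; apply: eq_big_nat => r /andP [_ rk].
by rewrite /resid gu_head // -exprMn mulrBl mul1r.
Qed.

Lemma resid_tail_sum_le :
  \sum_(k <= r < b) resid r ^+ 2 <= alpha ^+ 2 * (g k ^+ 2 * (c ^+ 2 * \sum_(0 <= r < k) u r ^+ 2)).
Proof.
have tail_le : \sum_(k <= r < b) resid r ^+ 2
    <= \sum_(k <= r < m) alpha ^+ 2 * (g k ^+ 2 * u r ^+ 2).
  rewrite (big_cat_nat kb bm) /= -[X in X <= _]addr0; apply: lerD; last first.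
    by apply: sumr_ge0 => r _; rewrite mulr_ge0 ?sqr_ge0 // mulr_ge0 ?sqr_ge0.
  apply: ler_sum_nat => r /andP [kr _].
  rewrite /resid x_head ?(leq_trans ik) // sub0r sqrrN !exprMn ler_wpM2l ?sqr_ge0 // ler_wpM2r ?sqr_ge0 //.
  by rewrite ler_pXn2r ?nnegrE ?g_nonincr.
by apply: (le_trans tail_le); rewrite -!mulr_sumr !ler_wpM2l ?sqr_ge0.
Qed.

Lemma resid_sum_le :
  \sum_(0 <= r < b) resid r ^+ 2 <= t ^+ 2 / (1 + t ^+ 2) * \sum_(0 <= r < k) x r ^+ 2.
Proof.
set X := \sum_(0 <= r < k) x r ^+ 2; set Y := \sum_(0 <= r < k) u r ^+ 2.
rewrite (big_cat_nat (leq0n k) kb) /= resid_head_sum.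
apply: le_trans (lerD (lexx _) resid_tail_sum_le) _.
have tpos : 0 < 1 + t ^+ 2 by rewrite ltr_pwDl ?sqr_ge0.
have tailY : g k ^+ 2 * (c ^+ 2 * Y) <= t ^+ 2 * X.
  have tgi : t * g i = g k * c by rewrite /t mulrAC divfK ?gt_eqF.
  rewrite -(ler_pM2l (exprn_gt0 2 gi_gt0)).
  have -> : g i ^+ 2 * (t ^+ 2 * X) = (g k * c) ^+ 2 * X by rewrite -tgi; ring.
  have -> : g i ^+ 2 * (g k ^+ 2 * (c ^+ 2 * Y)) = (g k * c) ^+ 2 * (g i ^+ 2 * Y) by ring.
  by rewrite ler_wpM2l ?sqr_ge0 ?head_weighted_le.
have -> : t ^+ 2 / (1 + t ^+ 2) = (1 - alpha) ^+ 2 + alpha ^+ 2 * t ^+ 2.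
  by rewrite /alpha; field; rewrite gt_eqF.
by rewrite mulrDl lerD2l -[_ * t ^+ 2 * X]mulrA ler_wpM2l ?sqr_ge0.
Qed.

End ResidualBound.

Lemma le_div_sqrt1D (R : realType) (s a : R) :
  0 <= s -> 0 <= a -> s ^+ 2 <= a ^+ 2 / (1 + a ^+ 2) -> s <= a / Num.sqrt (1 + a ^+ 2).
Proof.
move=> s0 a0 sa; have a2pos : 0 < 1 + a ^+ 2 by rewrite ltr_pwDl ?sqr_ge0.
rewrite -(ler_pXn2r (n := 2)) //; last by rewrite nnegrE divr_ge0 ?sqrtr_ge0.
by rewrite expr_div_n sqr_sqrtr // ltW.
Qed.

Section PrincipalSineBound.
Variable R : realType.
Variables (b m d e k : nat) (W : 'M[R]_b) (X : 'M[R]_(b, d)) (T : 'M[R]_(b, m)).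
Variables (Psi : 'M[R]_(m, e)) (Y : 'M[R]_(e, k)) (g : nat -> R) (c : R).
Local Notation headsel a := (colsel R a (fun j : 'I_k => (j : nat))).
Local Notation tailsel := (colsel R m (fun j : 'I_(m - k) => (k + j)%N)).

Hypotheses (kb : (k <= b)%N) (bm : (b <= m)%N).
Hypotheses (WW : W^T *m W = 1%:M) (XX : X^T *m X = 1%:M).
Hypothesis T_diag : forall (v : 'cV[R]_m) (r : 'I_b), (T *m v) r 0 = g r * mxentry v r 0.
Hypothesis range_WTPsi : (1%:M - X *m X^T) *m (W *m T *m Psi) = 0.
Hypothesis Psi1Y : (headsel m)^T *m Psi *m Y = 1%:M.
Hypothesis Psi2Y : forall y : 'cV[R]_k,
  sqnorm (tailsel^T *m Psi *m Y *m y) <= c ^+ 2 * sqnorm y.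
Hypothesis g_nonincr : forall r r', (r <= r')%N -> g r' <= g r.
Hypothesis g_ge0 : forall r, 0 <= g r.

(* [W T u] lies in [range X] for [u = Psi Y y], so subtracting [alpha W T u] from
   [W x] does not change its projection; [y] is chosen so that [T u] reproduces the
   head coordinates of [x]. *)
Lemma proj_head_sqnorm_le (i : 'I_k) (x : 'cV[R]_k) :
  0 < g i -> (forall j : 'I_k, (i < j)%N -> x j 0 = 0) ->
  sqnorm ((1%:M - X *m X^T) *m (W *m headsel b) *m x)
    <= (g k / g i * c) ^+ 2 / (1 + (g k / g i * c) ^+ 2) * sqnorm x.
Proof.
move=> gi0 xhead; set alpha := (1 + (g k / g i * c) ^+ 2)^-1.
set y : 'cV[R]_k := \col_j (x j 0 / g j); set u := Psi *m Y *m y.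
have WTu0 : (1%:M - X *m X^T) *m (W *m T *m u) = 0.
  by rewrite /u !mulmxA -(mulmxA _ W) -(mulmxA _ (W *m T)) range_WTPsi !mul0mx.
have -> : (1%:M - X *m X^T) *m (W *m headsel b) *m x
    = (1%:M - X *m X^T) *m (W *m (headsel b *m x - alpha *: (T *m u))).
  rewrite mulmxBr mulmxBr -!scalemxAr (mulmxA W T u) WTu0 scaler0 subr0.
  by rewrite !mulmxA.
apply: le_trans (sqnorm_proj_le _ XX) _; rewrite sqnorm_isometry // !sqnorm_big_nat.
have residE r : (r < b)%N ->
    mxentry (headsel b *m x - alpha *: (T *m u)) r 0
    = mxentry x r 0 - alpha * (g r * mxentry u r 0).
  move=> rb; rewrite (mxentryE _ (Ordinal rb) ord0).
  by move: (colsel_id_mulE x (Ordinal rb)) (T_diag u (Ordinal rb)); rewrite !mxE => -> ->.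
rewrite (eq_big_nat _ _ (fun r rb => congr1 (fun z => z ^+ 2) (residE r (andP rb).2))).
have yE : (headsel m)^T *m u = y by rewrite /u !mulmxA Psi1Y mul1mx.
apply: (resid_sum_le (m := m)) => //.
- move=> r ir; rewrite mxentry_col /at_nat; case: insubP => // j _ jr.
  by rewrite xhead // jr.
- move=> r rk; have := tr_colsel_mulE (fun j : 'I_k => (j : nat)) u (Ordinal rk).
  by rewrite yE !mxE => <-; rewrite (mxentryE x (Ordinal rk) ord0).
rewrite -sqnorm_tr_colsel_head -sqnorm_tr_colsel_tail yE /u !mulmxA.
exact: Psi2Y.
Qed.

Lemma principal_sine_le (i : 'I_k) (s : 'I_k -> R) :
  0 < g i -> 0 <= c -> principal_sines X (lcols W k) s -> s i <= angle_bound (g k / g i) c.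
Proof.
move=> gi0 c0 [sinc ssv]; have s0 : 0 <= s i by case: ssv => [? [? [_ _ + _]]].
rewrite /angle_bound -exprMn; apply: le_div_sqrt1D => //.
  by rewrite mulr_ge0 // divr_ge0 // ltW.
apply: (svals_sqr_le kb sinc ssv) => x xhead.
by rewrite lcols_colsel; apply: proj_head_sqnorm_le.
Qed.

End PrincipalSineBound.

Unset Implicit Arguments. Set Strict Implicit.

Theorem theorem2 (R : realType) (m n k p q : nat)
  (A : 'M[R]_(m, n)) (U : 'M[R]_m) (V : 'M[R]_n) (sigma : 'I_n -> R)
  (Phi : 'M[R]_(m, k + p)) (Pbar : 'M[R]_(n, k + p))
  (Q : 'M[R]_(m, k + p)) (Rm : 'M[R]_(k + p))
  (Pt : 'M[R]_(k + p)) (Rt : 'M[R]_(k + p))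
  (theta phi : 'I_k -> R) :
  (n <= m)%N -> (1 <= k)%N -> (1 <= p)%N -> (k + p < n)%N ->
  (* full SVD of A *)
  U^T *m U = 1%:M -> V^T *m V = 1%:M ->
  (forall j, 0 <= sigma j) ->
  (forall i j : 'I_n, (i <= j)%N -> sigma j <= sigma i) ->
  A = U *m rdiag m sigma *m V^T ->
  0 < at_nat sigma k.-1 ->
  (* RU-QLP *)
  orthonormal_cols Pbar ->
  same_range Pbar ((A^T *m A) ^+ q *m A^T *m Phi) ->
  \rank ((A^T *m A) ^+ q *m A^T *m Phi) = (k + p)%N ->
  orthonormal_cols Q -> upper_triangular Rm -> A *m Pbar = Q *m Rm ->
  orthonormal_cols Pt -> upper_triangular Rt -> Rm^T = Pt *m Rt ->
  let P := Pbar *m Pt in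
  let Phi1 := (lcols U k)^T *m Phi in
  let Phi2 := (rcols U k)^T *m Phi in
  \rank Phi1 = k ->
  principal_sines Q (lcols U k) theta ->
  principal_sines P (lcols V k) phi ->
  let c := norm2 (Phi2 *m mpinv Phi1) in
  forall i : 'I_k,
    let delta := at_nat sigma k / at_nat sigma i in
    theta i <= angle_bound (delta ^+ (2 * q + 2)) c /\
    phi i <= angle_bound (delta ^+ (2 * q + 1)) c.
Proof.
move=> nm k1 _ kpn UU VV s0 sdec AE sk1 Pbar_on sampled _ Q_on _ APQR Pt_on _ _
  P Phi1 Phi2 rank1 th ph c i delta.
have kn : (k <= n)%N := leq_trans (leq_addr p k) (ltnW kpn).
set S := rdiag m sigma; set Psi := U^T *m Phi.
have [D ND] := same_range_factor sampled.
have NE : (A^T *m A) ^+ q *m A^T *m Phi = V *m powtr S q *m Psi.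
  by rewrite -[_ *m A^T]/(powtr A q) AE powtr_svd // /Psi !mulmxA.
have rangeV : (1%:M - P *m P^T) *m (V *m powtr S q *m Psi) = 0.
  by rewrite -NE ND orthomx_mul_tr ?compl_proj_mul0.
have rangeU : (1%:M - Q *m Q^T) *m (U *m (S *m powtr S q) *m Psi) = 0.
  have <- : A *m (V *m powtr S q *m Psi) = U *m (S *m powtr S q) *m Psi.
    by rewrite AE -!mulmxA (mulmxA V^T) VV mul1mx !mulmxA.
  by rewrite -NE ND mulmxA APQR -mulmxA compl_proj_mul0.
have Psi1Y : (colsel R m (fun j : 'I_k => (j : nat)))^T *m Psi *m mpinv Phi1 = 1%:M.
  by rewrite /Psi mulmxA -trmx_mul -lcols_colsel mpinv_right.
have Psi2Y y : sqnorm ((colsel R m (fun j : 'I_(m - k) => (k + j)%N))^T *m Psi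
                       *m mpinv Phi1 *m y) <= c ^+ 2 * sqnorm y.
  by rewrite /Psi mulmxA -trmx_mul -rcols_colsel sqnorm_mul_le_norm2.
have c0 : 0 <= c by apply: norm2_ge0.
have si0 : 0 < at_nat sigma i.
  by apply: lt_le_trans sk1 (at_nat_nonincr s0 sdec _); rewrite -ltnS prednK.
have sigma_ge0 e r : 0 <= at_nat sigma r ^+ e by rewrite exprn_ge0 ?at_nat_ge0.
rewrite /delta !expr_div_n; split.
- apply: (principal_sine_le (leq_trans kn nm) (leqnn m) UU Q_on _ rangeU Psi1Y Psi2Y
          (at_nat_exp_nonincr _ s0 sdec) (sigma_ge0 _) (exprn_gt0 _ si0) c0 th).
  by move=> v r; rewrite /S rdiag_powtr_mulE.
- apply: (principal_sine_le kn nm VV (orthonormal_cols_mul Pbar_on Pt_on) _ rangeV Psi1Y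
          Psi2Y (at_nat_exp_nonincr _ s0 sdec) (sigma_ge0 _) (exprn_gt0 _ si0) c0 ph).
  by move=> v r; rewrite /S powtr_rdiag_mulE.
Qed.
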